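(* In the following setting: $n$ training samples with labels in $\{1,\dots,K\}$, indicator matrix $F\in\mathbb{R}^{K\times n}$, with the same number of samples in every class; basis $G_1,\dots,G_r$ ($r\le n$) a subset of the training samples with the same number ($\ge1$) of basis vectors in every class; $F_{G_i}$ the class indicator of $G_i$; $\tilde W\in\mathbb{R}^{r\times n}$ entrywise nonnegative, columns summing to one, full row rank, with $\tilde W_{ij}=0$ whenever $F_{G_i}\neq F_j$; $\tilde W'=\tilde W+\Delta W$ with $\Delta W\in\mathbb{R}^{r\times n}$; $\xi=\|\tilde W^\dagger\|_2\|\Delta W\|_2$, $\delta=\|\Delta W\|_F/\|\tilde W\|_F$; $X=F\tilde W^\dagger$, $X'=F\tilde W'^\dagger$, $\gamma=\|X\|_F^2\|\tilde W\|_F^2/\|X\tilde W\|_F^2$, $\epsilon'=\|F-X'\tilde W'\|_F^2/\|X'\tilde W'\|_F^2+1$, $\gamma'=\|X'\|_F^2\|\tilde W'\|_F^2/\|X'\tilde W'\|_F^2$. If $\xi<1$, then $$\epsilon'\le\frac{\xi^2}{(1-\xi)^2}+1,\qquad \gamma'\le\gamma(1+\delta)^2\Big(1+\frac{2\xi}{1-\xi}\Big)^2\le\gamma\frac{(1+\xi)^4}{(1-\xi)^2}.$$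
   Context: The columns of $F$ are standard basis vectors of $\mathbb{R}^K$: $F_j=e_k$ iff sample $j$ is in class $k$. $\|\cdot\|_2$ of a matrix is the spectral norm; $M^\dagger$ is the Moore–Penrose pseudo-inverse. *)

From HB Require Import structures.
From mathcomp Require Import all_boot all_order all_algebra.
From mathcomp Require Import boolp classical_sets reals.
Set Implicit Arguments. Unset Strict Implicit. Unset Printing Implicit Defensive.
Import Order.TTheory GRing.Theory Num.Theory.
Local Open Scope ring_scope.
Local Open Scope classical_set_scope.

Definition frob {R : realType} {m n : nat} (A : 'M[R]_(m, n)) : R :=
  Num.sqrt (\sum_(i < m) \sum_(j < n) A i j ^+ 2).

Definition spec_norm {R : realType} {m n : nat} (A : 'M[R]_(m, n)) : R :=
  sup [set frob (A *m v) | v in [set v : 'cV[R]_n | frob v <= 1]].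

Definition penrose {R : realType} {m n : nat} (A : 'M[R]_(m, n)) (B : 'M[R]_(n, m)) : Prop :=
  [/\ A *m B *m A = A, B *m A *m B = B, (A *m B)^T = A *m B & (B *m A)^T = B *m A].

(* Moore-Penrose pseudo-inverse (it exists and is unique for every real matrix) *)
Definition pinv {R : realType} {m n : nat} (A : 'M[R]_(m, n)) : 'M[R]_(n, m) :=
  match pselect (exists B, penrose A B) with
  | left h => proj1_sig (cid h)
  | right _ => 0
  end.

Definition indic {R : realType} {K n : nat} (lab : 'I_n -> 'I_K) : 'M[R]_(K, n) :=
  \matrix_(k < K, j < n) (lab j == k)%:R.

(* The columns of Wt sum to one and Wt vanishes across classes, so F = C Wt
   with C the class indicator of the basis; as Wt has full row rank,
   B = pinv Wt is a right inverse and X = C.  From Z = Z Wt B and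
   Wt = Wp - dW one gets (1 - xi) |Z| <= ||B|| |Z Wp| for every Z, so Wp keeps
   full row rank and P = pinv Wp Wp is an orthogonal projection with
   Wp (1 - P) = 0.  Hence X' Wp = F P, the residual F (1 - P) = - C dW (1 - P)
   has norm at most |C| ||dW||, and (1 - xi) |X'| is bounded both by |C| and
   by ||B|| |X' Wp|; the two ratio bounds are scalar consequences of these
   estimates. *)

From HB Require Import structures.
From mathcomp Require Import all_boot all_order all_algebra.
From mathcomp Require Import boolp classical_sets reals.
From mathcomp Require Import ring lra.
Set Implicit Arguments. Unset Strict Implicit. Unset Printing Implicit Defensive.
Import Order.TTheory GRing.Theory Num.Theory.
Local Open Scope ring_scope.

Lemma ler_of_sqr_mulr (R : realDomainType) (x y : R) :
  0 <= x -> 0 <= y -> x ^+ 2 <= y * x -> x <= y.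
Proof. by move=> *; nra. Qed.

Lemma ler_sqr_div (R : realFieldType) (x y u v : R) :
  0 <= x -> 0 <= y -> 0 <= u -> 0 < v -> x * v <= u * y ->
  x ^+ 2 / y ^+ 2 <= u ^+ 2 / v ^+ 2.
Proof.
move=> x0 y0 u0 v_gt0 xv_le.
(* for [y = 0] the left-hand side is the junk value [x ^+ 2 / 0 = 0] *)
have [->|y_neq0] := eqVneq y 0; first by rewrite expr0n invr0 mulr0 divr_ge0 ?sqr_ge0.
have y_gt0 : 0 < y by rewrite lt_def y_neq0.
rewrite -!expr_div_n (ler_pXn2r (isT : (0 < 2)%N)) ?nnegrE ?divr_ge0 ?(ltW v_gt0) //.
by rewrite ler_pdivrMr // mulrAC ler_pdivlMr.
Qed.

Section FrobeniusNorm.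
Variable R : realType.

Definition fdot m n (A B : 'M[R]_(m, n)) : R := \tr (A *m B^T).

Lemma fdotE m n (A B : 'M[R]_(m, n)) : fdot A B = \sum_i \sum_j A i j * B i j.
Proof. by apply: eq_bigr => i _; rewrite !mxE; apply: eq_bigr => j _; rewrite mxE. Qed.

Lemma fdotC m n (A B : 'M[R]_(m, n)) : fdot A B = fdot B A.
Proof. by rewrite /fdot -mxtrace_tr trmx_mul trmxK. Qed.

Lemma fdotDl m n (A B C : 'M[R]_(m, n)) : fdot (A + B) C = fdot A C + fdot B C.
Proof. by rewrite /fdot mulmxDl mxtraceD. Qed.

Lemma fdotZl m n a (A C : 'M[R]_(m, n)) : fdot (a *: A) C = a * fdot A C.
Proof. by rewrite /fdot -scalemxAl mxtraceZ. Qed.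

Lemma fdotNl m n (A C : 'M[R]_(m, n)) : fdot (- A) C = - fdot A C.
Proof. by rewrite -scaleN1r fdotZl mulN1r. Qed.

Lemma fdotDr m n (A B C : 'M[R]_(m, n)) : fdot C (A + B) = fdot C A + fdot C B.
Proof. by rewrite fdotC fdotDl !(fdotC C). Qed.

Lemma fdotZr m n a (A C : 'M[R]_(m, n)) : fdot C (a *: A) = a * fdot C A.
Proof. by rewrite fdotC fdotZl fdotC. Qed.

Lemma fdotNr m n (A C : 'M[R]_(m, n)) : fdot C (- A) = - fdot C A.
Proof. by rewrite fdotC fdotNl fdotC. Qed.

Lemma fdot_mulmxl m n p (A : 'M[R]_(m, n)) (B : 'M[R]_(n, p)) Z :
  fdot (A *m B) Z = fdot A (Z *m B^T).
Proof. by rewrite /fdot trmx_mul trmxK mulmxA. Qed.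

Lemma fdot_trmx m n (A B : 'M[R]_(m, n)) : fdot A^T B^T = fdot A B.
Proof. by rewrite fdotC /fdot trmxK mxtrace_mulC. Qed.

Lemma fdot_ge0 m n (A : 'M[R]_(m, n)) : 0 <= fdot A A.
Proof. by rewrite fdotE; do 2![apply: sumr_ge0 => ? _]; rewrite -expr2 sqr_ge0. Qed.

Lemma frob_fdot m n (A : 'M[R]_(m, n)) : frob A = Num.sqrt (fdot A A).
Proof. by rewrite fdotE; congr Num.sqrt; do 2![apply: eq_bigr => ? _]; rewrite expr2. Qed.

Lemma frob_ge0 m n (A : 'M[R]_(m, n)) : 0 <= frob A.
Proof. exact: sqrtr_ge0. Qed.

Lemma sqr_frob m n (A : 'M[R]_(m, n)) : frob A ^+ 2 = fdot A A.
Proof. by rewrite frob_fdot sqr_sqrtr ?fdot_ge0. Qed.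

Lemma sqr_frob_col m n (A : 'M[R]_(m, n)) : frob A ^+ 2 = \sum_j frob (col j A) ^+ 2.
Proof.
rewrite sqr_frob fdotE exchange_big; apply: eq_bigr => j _.
by rewrite sqr_frob fdotE; apply: eq_bigr => i _; rewrite big_ord1 !mxE.
Qed.

Lemma frob_eq0 m n (A : 'M[R]_(m, n)) : frob A = 0 -> A = 0.
Proof.
move=> A0; apply/matrixP => i j; rewrite mxE.
have sq_ge0 k l : 0 <= A k l * A k l by rewrite -expr2 sqr_ge0.
have := sqr_frob A; rewrite A0 expr0n fdotE => /esym rows0.
have /(_ i isT) row0 := psumr_eq0P (fun k _ => sumr_ge0 _ (fun l _ => sq_ge0 k l)) rows0.
have /eqP := psumr_eq0P (fun l _ => sq_ge0 i l) row0 (i:=j) isT.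
by rewrite mulf_eq0 orbb => /eqP.
Qed.

Lemma frob0 m n : frob (0 : 'M[R]_(m, n)) = 0.
Proof. by rewrite frob_fdot /fdot mul0mx mxtrace0 sqrtr0. Qed.

Lemma frobZ m n a (A : 'M[R]_(m, n)) : frob (a *: A) = `|a| * frob A.
Proof. by rewrite !frob_fdot fdotZl fdotZr mulrA -expr2 sqrtrM ?sqr_ge0 // sqrtr_sqr. Qed.

Lemma frobN m n (A : 'M[R]_(m, n)) : frob (- A) = frob A.
Proof. by rewrite !frob_fdot fdotNl fdotNr opprK. Qed.

Lemma frob_trmx m n (A : 'M[R]_(m, n)) : frob A^T = frob A.
Proof. by rewrite !frob_fdot fdot_trmx. Qed.

Lemma fdot_le_frob m n (A B : 'M[R]_(m, n)) : fdot A B <= frob A * frob B.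
Proof.
have [/frob_eq0 ->|a0] := eqVneq (frob A) 0.
  by rewrite /fdot mul0mx mxtrace0 frob0 mul0r.
have [/frob_eq0 ->|b0] := eqVneq (frob B) 0.
  by rewrite /fdot trmx0 mulmx0 mxtrace0 frob0 mulr0.
have ab_gt0 : 0 < frob A * frob B by rewrite mulr_gt0 // lt_def ?a0 ?b0 frob_ge0.
(* expand [0 <= |b A - a B|^2] with [a = |A|], [b = |B|] *)
have := fdot_ge0 (frob B *: A - frob A *: B).
rewrite !(fdotDl, fdotDr, fdotNl, fdotNr, fdotZl, fdotZr) -!sqr_frob (fdotC B A).
by nra.
Qed.

Lemma ler_frobD m n (A B : 'M[R]_(m, n)) : frob (A + B) <= frob A + frob B.
Proof.
rewrite -(ler_pXn2r (isT : (0 < 2)%N)) ?nnegrE ?addr_ge0 ?frob_ge0 //.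
rewrite sqr_frob !(fdotDl, fdotDr) -!sqr_frob (fdotC B A).
by have := fdot_le_frob A B; lra.
Qed.

Lemma ler_frobB m n (A B : 'M[R]_(m, n)) : frob (A - B) <= frob A + frob B.
Proof. by rewrite -(frobN B) ler_frobD. Qed.

Lemma frob_outer m n (x : 'cV[R]_m) (y : 'cV[R]_n) :
  frob (x *m y^T) = frob x * frob y.
Proof.
rewrite !frob_fdot -sqrtrM ?fdot_ge0 // !fdotE mulr_suml; congr Num.sqrt.
apply: eq_bigr => i _; rewrite big_ord1 mulr_sumr; apply: eq_bigr => j _.
by rewrite big_ord1 !mxE !big_ord1 !mxE; ring.
Qed.

Lemma frob_mulmxv m n (A : 'M[R]_(m, n)) (v : 'cV[R]_n) :
  frob (A *m v) <= frob A * frob v.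
Proof.
apply: ler_of_sqr_mulr; rewrite ?mulr_ge0 ?frob_ge0 // sqr_frob fdot_mulmxl.
by rewrite (le_trans (fdot_le_frob _ _)) // frob_outer mulrA mulrAC.
Qed.

Lemma frob_mulmx_orthoproj m n (V : 'M[R]_(m, n)) (P : 'M[R]_n) :
  P^T = P -> P *m P = P -> frob (V *m P) <= frob V.
Proof.
move=> PT PP; apply: ler_of_sqr_mulr; rewrite ?frob_ge0 //.
rewrite sqr_frob fdot_mulmxl PT -mulmxA PP.
exact: fdot_le_frob.
Qed.

End FrobeniusNorm.

Section SpectralNorm.
Variable R : realType.

Lemma spec_norm_has_sup m n (A : 'M[R]_(m, n)) :
  has_sup [set frob (A *m v) | v in [set v : 'cV[R]_n | frob v <= 1]]%classic.
Proof.
split; first by exists (frob (A *m (0 : 'cV[R]_n))); exists 0 => //=; rewrite frob0.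
exists (frob A) => _ [v /= v_le1 <-].
by rewrite (le_trans (frob_mulmxv _ _)) // ler_piMr ?frob_ge0.
Qed.

Lemma spec_norm_ge0 m n (A : 'M[R]_(m, n)) : 0 <= spec_norm A.
Proof.
apply: le_trans (sup_upper_bound (spec_norm_has_sup A) _); last first.
  by exists 0 => //=; rewrite frob0.
by rewrite mulmx0 frob0.
Qed.

Lemma frob_mulmxv_spec m n (A : 'M[R]_(m, n)) (v : 'cV[R]_n) :
  frob (A *m v) <= spec_norm A * frob v.
Proof.
have [/frob_eq0 ->|v0] := eqVneq (frob v) 0; first by rewrite mulmx0 !frob0 mulr0.
have v_gt0 : 0 < frob v by rewrite lt_def v0 frob_ge0.
have inv_ge0 : 0 <= (frob v)^-1 by rewrite invr_ge0 frob_ge0.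
have := sup_upper_bound (spec_norm_has_sup A) (ex_intro2 _ _ ((frob v)^-1 *: v) _ erefl).
rewrite -scalemxAr frobZ ger0_norm // -ler_pdivlMl ?invr_gt0 // invrK mulrC.
by apply; rewrite /= frobZ ger0_norm // mulVf.
Qed.

Lemma spec_norm_le m n (A : 'M[R]_(m, n)) b :
  (forall v : 'cV[R]_n, frob v <= 1 -> frob (A *m v) <= b) -> spec_norm A <= b.
Proof.
move=> A_le; apply: ge_sup.
  by exists (frob (A *m (0 : 'cV[R]_n))), 0 => //=; rewrite frob0.
by move=> _ [v /= v_le1 <-]; apply: A_le.
Qed.

Lemma spec_norm_mulmx m n p (A : 'M[R]_(m, n)) (B : 'M[R]_(n, p)) :
  spec_norm (A *m B) <= spec_norm A * spec_norm B.
Proof.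
apply: spec_norm_le => v v_le1; rewrite -mulmxA.
apply: le_trans (frob_mulmxv_spec _ _) _; rewrite ler_wpM2l ?spec_norm_ge0 //.
apply: le_trans (frob_mulmxv_spec _ _) _.
by rewrite ler_piMr ?spec_norm_ge0.
Qed.

Lemma frob_mulmx_specl m n p (A : 'M[R]_(m, n)) (B : 'M[R]_(n, p)) :
  frob (A *m B) <= spec_norm A * frob B.
Proof.
rewrite -(ler_pXn2r (isT : (0 < 2)%N)) ?nnegrE ?mulr_ge0 ?frob_ge0 ?spec_norm_ge0 //.
rewrite exprMn !sqr_frob_col mulr_sumr; apply: ler_sum => j _.
have colM : col j (A *m B) = A *m col j B by rewrite !colE mulmxA.
rewrite colM -exprMn lerXn2r ?nnegrE ?mulr_ge0 ?frob_ge0 ?spec_norm_ge0 //.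
exact: frob_mulmxv_spec.
Qed.

Lemma frob_mulmx_specr m n p (A : 'M[R]_(m, n)) (B : 'M[R]_(n, p)) :
  frob (A *m B) <= frob A * spec_norm B.
Proof.
(* [spec_norm] acts on columns, so bound [|(A B) B^T| = |B (A B)^T|] on the left. *)
apply: ler_of_sqr_mulr; rewrite ?mulr_ge0 ?frob_ge0 ?spec_norm_ge0 //.
rewrite sqr_frob fdot_mulmxl (le_trans (fdot_le_frob _ _)) // -mulrA.
rewrite ler_wpM2l ?frob_ge0 // -frob_trmx trmx_mul trmxK.
by rewrite (le_trans (frob_mulmx_specl _ _)) // frob_trmx.
Qed.

End SpectralNorm.

Section PseudoInverse.
Variable R : realType.

Lemma pinv_penrose m n (A : 'M[R]_(m, n)) :
  (exists B, penrose A B) -> penrose A (pinv A).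
Proof.
by move=> exA; rewrite /pinv; case: pselect => // exA'; exact: proj2_sig (cid exA').
Qed.

Lemma row_free_penrose m n (A : 'M[R]_(m, n)) : row_free A -> exists B, penrose A B.
Proof.
move=> A_free; have AAT_unit : A *m A^T \in unitmx.
  rewrite -row_free_unit; apply: inj_row_free => v vAAT0.
  have /frob_eq0/eqP : frob (v *m A) = 0.
    by rewrite frob_fdot fdot_mulmxl -mulmxA vAAT0 /fdot trmx0 mulmx0 mxtrace0 sqrtr0.
  by rewrite mulmx_free_eq0 // => /eqP.
have AB1 : A *m (A^T *m invmx (A *m A^T)) = 1%:M by rewrite mulmxA mulmxV.
exists (A^T *m invmx (A *m A^T)); split.
- by rewrite AB1 mul1mx.
- by rewrite -!mulmxA AB1 mulmx1.
- by rewrite AB1 trmx1.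
- by rewrite !trmx_mul trmx_inv trmx_mul trmxK mulmxA.
Qed.

Variables (m n : nat) (A : 'M[R]_(m, n)).
Hypothesis A_free : row_free A.

Lemma mulmx_pinv : A *m pinv A = 1%:M.
Proof.
have [AAA _ _ _] := pinv_penrose (row_free_penrose A_free).
apply/eqP; rewrite -subr_eq0 -(mulmx_free_eq0 _ A_free).
by rewrite mulmxBl AAA mul1mx subrr.
Qed.

Lemma mulmx_pinv_coproj : A *m (1%:M - pinv A *m A) = 0.
Proof. by rewrite mulmxBr mulmx1 mulmxA mulmx_pinv mul1mx subrr. Qed.

Lemma frob_mulmx_pinv_coproj k (V : 'M[R]_(k, n)) :
  frob (V *m (1%:M - pinv A *m A)) <= frob V.
Proof.
have [_ _ _ PT] := pinv_penrose (row_free_penrose A_free).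
apply: frob_mulmx_orthoproj; first by rewrite linearB /= trmx1 PT.
by rewrite mulmxBl mul1mx -mulmxA mulmx_pinv_coproj mulmx0 subr0.
Qed.

Lemma frob_mulmx_pinv_proj k (V : 'M[R]_(k, n)) :
  frob (V *m (pinv A *m A)) <= frob V.
Proof.
have [_ _ _ PT] := pinv_penrose (row_free_penrose A_free).
apply: frob_mulmx_orthoproj => //.
by rewrite mulmxA -(mulmxA _ A) mulmx_pinv mulmx1.
Qed.

Lemma frob_le_mulmx_pinv k (C : 'M[R]_(k, m)) :
  frob C <= frob (C *m A) * spec_norm (pinv A).
Proof. by rewrite -{1}(mulmx1 C) -mulmx_pinv mulmxA frob_mulmx_specr. Qed.

End PseudoInverse.

Section Perturbation.
Variables (R : realType) (K r n : nat) (C : 'M[R]_(K, r)) (W D : 'M[R]_(r, n)).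
Hypothesis W_free : row_free W.

Let p := spec_norm (pinv W).
Let d := spec_norm D.
Let xi := p * d.
Hypothesis xi_lt1 : xi < 1.

Let p_ge0 : 0 <= p. Proof. exact: spec_norm_ge0. Qed.
Let d_ge0 : 0 <= d. Proof. exact: spec_norm_ge0. Qed.
Let xi_ge0 : 0 <= xi. Proof. exact: mulr_ge0. Qed.
Let subr_xi_gt0 : 0 < 1 - xi. Proof. by rewrite subr_gt0. Qed.

Lemma frob_le_mulmx_perturbed k (Z : 'M[R]_(k, r)) :
  (1 - xi) * frob Z <= p * frob (Z *m (W + D)).
Proof.
have Z_le : frob Z <= frob (Z *m W) * p := frob_le_mulmx_pinv W_free Z.
have ZW_le : frob (Z *m W) <= frob (Z *m (W + D)) + frob Z * d.
  have -> : Z *m W = Z *m (W + D) - Z *m D by rewrite mulmxDr addrK.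
  by rewrite (le_trans (ler_frobB _ _)) // lerD2l frob_mulmx_specr.
by have := ler_wpM2l p_ge0 ZW_le; rewrite /xi; lra.
Qed.

Lemma perturbed_row_free : row_free (W + D).
Proof.
apply: inj_row_free => v vWD0; apply: frob_eq0.
have := frob_le_mulmx_perturbed v; rewrite vWD0 frob0 mulr0 pmulr_rle0 //.
by move=> v_le0; apply/eqP; rewrite eq_le v_le0 frob_ge0.
Qed.

Lemma frob_perturbation_le : frob D <= frob W * xi.
Proof.
rewrite -{1}[D]mul1mx -(mulmx_pinv W_free) -mulmxA.
apply: le_trans (frob_mulmx_specr _ _) _.
by rewrite ler_wpM2l ?frob_ge0 ?spec_norm_mulmx.
Qed.

Lemma perturbation_ratio_le : frob D / frob W <= xi.
Proof.
have [->|W_neq0] := eqVneq (frob W) 0; first by rewrite invr0 mulr0.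
have W_gt0 : 0 < frob W by rewrite lt_def W_neq0 frob_ge0.
by rewrite ler_pdivrMr // mulrC frob_perturbation_le.
Qed.

Lemma frob_perturbed_le : frob (W + D) <= frob W * (1 + frob D / frob W).
Proof.
apply: le_trans (ler_frobD _ _) _.
have [W0|W_neq0] := eqVneq (frob W) 0.
  by have := frob_perturbation_le; have := frob_ge0 D; rewrite W0 mul0r; lra.
by rewrite mulrDr mulr1 mulrC divfK.
Qed.

Let F := C *m W.
Let X' := F *m pinv (W + D).

Lemma frob_residual_le : frob (F - X' *m (W + D)) <= frob C * d.
Proof.
set Q := 1%:M - pinv (W + D) *m (W + D).
have WDQ0 : (W + D) *m Q = 0 := mulmx_pinv_coproj perturbed_row_free.
have -> : F - X' *m (W + D) = - (C *m D *m Q).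
  rewrite /X' -mulmxA -{1}[F]mulmx1 -mulmxBr /F -{1}(addrK D W).
  by rewrite -/Q (mulmxBr C) mulmxBl -mulmxA WDQ0 mulmx0 sub0r.
rewrite frobN (le_trans (frob_mulmx_pinv_coproj perturbed_row_free _)) //.
exact: frob_mulmx_specr.
Qed.

Lemma frob_fit_le : frob (X' *m (W + D)) <= frob F.
Proof. by rewrite -mulmxA frob_mulmx_pinv_proj ?perturbed_row_free. Qed.

Lemma frob_le_fit_residual : frob F <= frob (X' *m (W + D)) + frob C * d.
Proof.
rewrite -{1}(subrKC (X' *m (W + D)) F).
by rewrite (le_trans (ler_frobD _ _)) // lerD2l frob_residual_le.
Qed.

Lemma frob_coef_le : (1 - xi) * frob X' <= frob C.
Proof.
set E := C *m D *m pinv (W + D).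
have X'E : X' = C - E.
  rewrite /X' /F -{1}(addrK D W) (mulmxBr C) mulmxBl -mulmxA.
  by rewrite mulmx_pinv ?perturbed_row_free // mulmx1.
have E_le : (1 - xi) * frob E <= p * (frob C * d).
  rewrite (le_trans (frob_le_mulmx_perturbed E)) // ler_wpM2l //.
  rewrite -mulmxA (le_trans (frob_mulmx_pinv_proj perturbed_row_free _)) //.
  exact: frob_mulmx_specr.
have X'_le : frob X' <= frob C + frob E by rewrite X'E ler_frobB.
have := ler_wpM2l (ltW subr_xi_gt0) X'_le.
by rewrite /xi in E_le *; nra.
Qed.

Lemma frob_coef_fit_le :
  (1 - xi) * frob X' * frob F <= (1 + xi) * frob C * frob (X' *m (W + D)).
Proof.
set Y := (1 - xi) * frob X'; set N := frob (X' *m (W + D)).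
have Y_ge0 : 0 <= Y by rewrite mulr_ge0 ?frob_ge0 ?(ltW subr_xi_gt0).
have cd_ge0 : 0 <= frob C * d by rewrite mulr_ge0 ?frob_ge0.
have := ler_wpM2l Y_ge0 frob_le_fit_residual.
have := ler_wpM2r (frob_ge0 (X' *m (W + D))) frob_coef_le.
have := ler_wpM2r cd_ge0 (frob_le_mulmx_perturbed X').
by rewrite -/Y -/N /xi; lra.
Qed.

Lemma residual_ratio_le :
  frob (F - X' *m (W + D)) ^+ 2 / frob (X' *m (W + D)) ^+ 2 <= xi ^+ 2 / (1 - xi) ^+ 2.
Proof.
apply: ler_sqr_div; rewrite ?frob_ge0 //.
have := ler_wpM2r (ltW subr_xi_gt0) frob_residual_le.
have := ler_wpM2r d_ge0 (frob_le_mulmx_pinv W_free C).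
have := ler_wpM2l xi_ge0 frob_le_fit_residual.
by rewrite -/F -/p /xi; lra.
Qed.

Lemma conditioning_ratio_le :
  frob X' ^+ 2 * frob (W + D) ^+ 2 / frob (X' *m (W + D)) ^+ 2 <=
  frob C ^+ 2 * frob W ^+ 2 / frob F ^+ 2 * (1 + frob D / frob W) ^+ 2
    * (1 + 2 * xi / (1 - xi)) ^+ 2.
Proof.
have [F0|F_neq0] := eqVneq (frob F) 0.
  have -> : frob (X' *m (W + D)) = 0.
    by apply/eqP; rewrite eq_le frob_ge0 andbT -F0 frob_fit_le.
  by rewrite expr0n invr0 mulr0 !mulr_ge0 ?invr_ge0 ?sqr_ge0 ?frob_ge0 //
    addr_ge0 ?divr_ge0 ?mulr_ge0 ?frob_ge0 ?(ltW subr_xi_gt0).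
set delta := frob D / frob W.
have -> : frob C ^+ 2 * frob W ^+ 2 / frob F ^+ 2 * (1 + delta) ^+ 2
    * (1 + 2 * xi / (1 - xi)) ^+ 2 =
  (frob C * (frob W * (1 + delta)) * (1 + xi)) ^+ 2 / (frob F * (1 - xi)) ^+ 2.
  by field; rewrite F_neq0 gt_eqF.
have delta_ge0 : 0 <= delta by rewrite divr_ge0 ?frob_ge0.
rewrite -exprMn; apply: ler_sqr_div; rewrite ?mulr_ge0 ?frob_ge0 ?addr_ge0 //.
  by rewrite mulr_gt0 // lt_def F_neq0 frob_ge0.
have fit_ge0 : 0 <= (1 - xi) * frob X' * frob F.
  by rewrite !mulr_ge0 ?frob_ge0 ?(ltW subr_xi_gt0).
have := ler_pM fit_ge0 (frob_ge0 (W + D)) frob_coef_fit_le frob_perturbed_le.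
by rewrite -/delta; nra.
Qed.

End Perturbation.

Lemma ler_perturbation_factor (R : realFieldType) (gamma delta xi : R) :
  0 <= gamma -> 0 <= delta -> delta <= xi -> xi < 1 ->
  gamma * (1 + delta) ^+ 2 * (1 + 2 * xi / (1 - xi)) ^+ 2
    <= gamma * (1 + xi) ^+ 4 / (1 - xi) ^+ 2.
Proof.
move=> gamma_ge0 delta_ge0 delta_le xi_lt1.
have -> : gamma * (1 + xi) ^+ 4 / (1 - xi) ^+ 2
    = gamma * (1 + xi) ^+ 2 * (1 + 2 * xi / (1 - xi)) ^+ 2.
  by field; rewrite gt_eqF // subr_gt0.
by rewrite ler_wpM2r ?sqr_ge0 // ler_wpM2l //; nra.
Qed.

Lemma indic_factor (R : realType) (K r n : nat) (labG : 'I_r -> 'I_K)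
    (lab : 'I_n -> 'I_K) (W : 'M[R]_(r, n)) :
  (forall j, \sum_i W i j = 1) -> (forall i j, labG i != lab j -> W i j = 0) ->
  indic lab = indic labG *m W.
Proof.
move=> W_sum1 W_supp; apply/matrixP => k j; rewrite !mxE.
rewrite (eq_bigr (fun i => (lab j == k)%:R * W i j)) -?mulr_sumr ?W_sum1 ?mulr1 //.
move=> i _; rewrite mxE; have [->//|labG_neq] := eqVneq (labG i) (lab j).
by rewrite W_supp // !mulr0.
Qed.

Theorem corollary3 (R : realType) (K n r : nat)
  (lab : 'I_n -> 'I_K)            (* labels of the training samples *)
  (g : 'I_r -> 'I_n)              (* basis G_i = training sample g i *)
  (Wt dW : 'M[R]_(r, n)) :
  (* same number of samples in every class *)
  (forall k1 k2 : 'I_K, #|[set j | lab j == k1]| = #|[set j | lab j == k2]|) ->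
  (r <= n)%N -> injective g ->
  (* same number (>= 1) of basis vectors in every class *)
  (forall k1 k2 : 'I_K, #|[set i | lab (g i) == k1]| = #|[set i | lab (g i) == k2]|) ->
  (forall k : 'I_K, (0 < #|[set i | lab (g i) == k]|)%N) ->
  (forall i j, 0 <= Wt i j) ->
  (forall j, \sum_(i < r) Wt i j = 1) ->
  \rank Wt = r ->
  (forall i j, lab (g i) != lab j -> Wt i j = 0) ->
  let F : 'M[R]_(K, n) := indic lab in
  let Wp := Wt + dW in
  let xi := spec_norm (pinv Wt) * spec_norm dW in
  let delta := frob dW / frob Wt in
  let X := F *m pinv Wt in
  let X' := F *m pinv Wp in
  let gamma := frob X ^+ 2 * frob Wt ^+ 2 / frob (X *m Wt) ^+ 2 in
  let eps' := frob (F - X' *m Wp) ^+ 2 / frob (X' *m Wp) ^+ 2 + 1 in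
  let gamma' := frob X' ^+ 2 * frob Wp ^+ 2 / frob (X' *m Wp) ^+ 2 in
  xi < 1 ->
  eps' <= xi ^+ 2 / (1 - xi) ^+ 2 + 1 /\
  gamma' <= gamma * (1 + delta) ^+ 2 * (1 + 2 * xi / (1 - xi)) ^+ 2 /\
  gamma * (1 + delta) ^+ 2 * (1 + 2 * xi / (1 - xi)) ^+ 2
    <= gamma * (1 + xi) ^+ 4 / (1 - xi) ^+ 2.
Proof.
move=> _ _ _ _ _ _ Wt_sum1 Wt_rank Wt_supp F Wp xi delta X X' gamma eps' gamma' xi_lt1.
have Wt_free : row_free Wt by rewrite /row_free Wt_rank.
set C : 'M[R]_(K, r) := indic (fun i => lab (g i)).
have FE : F = C *m Wt := indic_factor Wt_sum1 Wt_supp.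
have XE : X = C by rewrite /X FE -mulmxA mulmx_pinv // mulmx1.
have gammaE : gamma = frob C ^+ 2 * frob Wt ^+ 2 / frob F ^+ 2.
  by rewrite /gamma XE -FE.
split; [|split].
- by rewrite /eps' lerD2r /X' FE; exact: residual_ratio_le.
- by rewrite /gamma' gammaE /X' FE; exact: conditioning_ratio_le.
- apply: ler_perturbation_factor => //; last exact: perturbation_ratio_le.
  + by rewrite gammaE !mulr_ge0 ?invr_ge0 ?sqr_ge0 ?frob_ge0.
  + by rewrite divr_ge0 ?frob_ge0.
Qed.
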